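(* Let $w\in W$ and $\alpha\in\Phi^+\cap w\Phi^-$ with $\ell(\sigma_\alpha w)=\ell(w)-1$. For $\beta\in(\Phi^+\cap w\Phi^-)\setminus\{\alpha\}$ define $\psi(\beta)=\beta-\alpha$ if $(\alpha,\beta)=1$, $\beta-\alpha\in\Phi^+$, and $\beta-\alpha\notin\Phi^+\cap w\Phi^-$; and $\psi(\beta)=\beta$ otherwise. Then $\psi$ is a bijection from $(\Phi^+\cap w\Phi^-)\setminus\{\alpha\}$ onto $\Phi^+\cap(\sigma_\alpha w)\Phi^-$. If moreover $w^{-1}\alpha\in-\Pi$, then $\Phi^+\cap(\sigma_\alpha w)\Phi^-=(\Phi^+\cap w\Phi^-)\setminus\{\alpha\}$.
   Context: $\Phi$ is a simply laced root system with positive roots $\Phi^+$, $\Phi^-=-\Phi^+$, simple roots $\Pi$, Weyl group $W$, length $\ell$, reflections $\sigma_\alpha$; the scalar product is normalized so that $(\alpha,\alpha)=2$ for all roots. *)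

(* Roots are column vectors in R^n (R a real field) with the
   standard dot product; Weyl group elements are n x n matrices acting by
   left multiplication. *)
From HB Require Import structures.
From mathcomp Require Import all_boot all_order all_algebra.
From Stdlib Require Import ClassicalDescription.
Set Implicit Arguments. Unset Strict Implicit. Unset Printing Implicit Defensive.
Import Order.TTheory GRing.Theory Num.Theory.
Local Open Scope ring_scope.

Section RootSystems.
Variables (R : realFieldType) (n : nat).
Implicit Types (u v a b : 'cV[R]_n) (Phi Pi : seq 'cV[R]_n) (w : 'M[R]_n).

Definition dot u v : R := (u^T *m v) 0 0.

(* matrix of the reflection sigma_a : v |-> v - (a,v) a  (valid as (a,a)=2) *)
Definition refl_mx a : 'M[R]_n := 1%:M - a *m a^T.

Definition simply_laced_root_system Phi : Prop :=
  [/\ 0 \notin Phi,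
      forall a, a \in Phi -> dot a a = 2,
      forall a b, a \in Phi -> b \in Phi -> refl_mx a *m b \in Phi &
      forall a b, a \in Phi -> b \in Phi -> exists z : int, dot a b = z%:~R].

Definition pos_comb Pi v : Prop :=
  exists c : 'I_(size Pi) -> R,
    (forall i, 0 <= c i) /\ v = \sum_(i < size Pi) c i *: Pi`_i.

Definition simple_system Phi Pi : Prop :=
  [/\ {subset Pi <= Phi},
      (forall c : 'I_(size Pi) -> R,
          \sum_(i < size Pi) c i *: Pi`_i = 0 -> forall i, c i = 0) &
      forall b, b \in Phi -> pos_comb Pi b \/ pos_comb Pi (- b)].

Definition is_pos Phi Pi b : Prop := b \in Phi /\ pos_comb Pi b.
Definition is_neg Phi Pi b : Prop := is_pos Phi Pi (- b).

Definition wprod (s : seq 'cV[R]_n) : 'M[R]_n :=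
  foldr (fun a M => refl_mx a *m M) 1%:M s.

Definition in_weyl Phi w : Prop :=
  exists s : seq 'cV[R]_n, {subset s <= Phi} /\ w = wprod s.

Definition has_word Pi w (k : nat) : Prop :=
  exists s : seq 'cV[R]_n, [/\ size s = k, {subset s <= Pi} & w = wprod s].
Definition ell_is Pi w (k : nat) : Prop :=
  has_word Pi w k /\ forall j : nat, (j < k)%N -> ~ has_word Pi w j.

Definition in_wneg Phi Pi w b : Prop :=
  exists g, is_neg Phi Pi g /\ b = w *m g.

Definition inv_set Phi Pi w b : Prop := is_pos Phi Pi b /\ in_wneg Phi Pi w b.

Definition psi Phi Pi w a b : 'cV[R]_n :=
  if excluded_middle_informative
       [/\ dot a b = 1, is_pos Phi Pi (b - a) & ~ inv_set Phi Pi w (b - a)]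
  then b - a else b.

End RootSystems.

From HB Require Import structures.
From mathcomp Require Import all_boot all_order all_algebra.
From mathcomp Require Import zify lra.
From Stdlib Require Import ClassicalDescription.
Set Implicit Arguments. Unset Strict Implicit. Unset Printing Implicit Defensive.
Import Order.TTheory GRing.Theory Num.Theory.
Local Open Scope ring_scope.

(* The inversion set N(u) = Phi^+ cap u Phi^- of an element of W has exactly
   l(u) elements, as the exchange condition shows.  For a in N(w) the map
   [c |-> c + a if (a,c) = -1 and c is not in N(w), c otherwise] sends
   N(sigma_a w) into N(w) minus a and is a right inverse of psi there; both
   sets have l(w) - 1 elements, so psi is a bijection.  When w^-1 a = -p with
   p simple, sigma_p permutes the positive roots other than p, which forces
   every shifted root b - a with (a,b) = 1 to lie in N(w): psi is the
   identity. *)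

Definition asbool (P : Prop) : bool :=
  if excluded_middle_informative P then true else false.

Lemma asboolP (P : Prop) : reflect P (asbool P).
Proof. by rewrite /asbool; case: excluded_middle_informative => H; constructor. Qed.

Lemma subset_consP (T : eqType) (x : T) (s : seq T) (A : {pred T}) :
  {subset x :: s <= A} -> x \in A /\ {subset s <= A}.
Proof. by move=> sA; split=> [|y ys]; apply: sA; rewrite inE ?eqxx ?ys ?orbT. Qed.

Lemma count_involution (T : eqType) (l : seq T) (f : T -> T) (P : pred T) :
  uniq l -> involutive f -> {homo f : x / x \in l} ->
  count (fun x => P (f x)) l = count P l.
Proof.
move=> ul fK fl; rewrite -(count_map f P); apply/permP.
apply: uniq_perm => //; first by rewrite map_inj_uniq //; exact: inv_inj.
move=> x; apply/mapP/idP => [[y /fl ? ->] //|lx].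
by exists (f x); rewrite ?fK ?fl.
Qed.

Lemma count_surj (T : eqType) (l : seq T) (P Q : pred T) (f g : T -> T) :
  uniq l -> {subset P <= l} -> {in Q, forall c, P (f c)} -> {in Q, cancel f g} ->
  count P l = count Q l -> {in P, forall b, exists2 c, Q c & f c = b}.
Proof.
move=> ul Pl fQ fK cPQ b Pb.
have [_ eqPQ] : (size (map f (filter Q l)) = size (filter P l))
                * (map f (filter Q l) =i filter P l).
  apply: uniq_min_size.
  - rewrite map_inj_in_uniq ?filter_uniq // => x y.
    rewrite !mem_filter => /andP[Qx _] /andP[Qy _] efxy.
    by rewrite -(fK x Qx) -(fK y Qy) efxy.
  - move=> y /mapP[c]; rewrite mem_filter => /andP[Qc _] ->.
    by have PfQ := fQ c Qc; rewrite mem_filter PfQ Pl.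
  - by rewrite size_map !size_filter cPQ.
have : b \in filter P l by rewrite mem_filter (Pl b Pb) andbT.
rewrite -eqPQ => /mapP[c]; rewrite mem_filter => /andP[Qc _] ->.
by exists c.
Qed.

Section ScalarProduct.
Variables (R : realFieldType) (n : nat).
Implicit Types (a b u v x : 'cV[R]_n) (M : 'M[R]_n).

Lemma dotC u v : dot u v = dot v u.
Proof. by rewrite /dot -[u^T *m v]trmxK trmx_mul trmxK mxE. Qed.

Lemma dotDr u v x : dot u (v + x) = dot u v + dot u x.
Proof. by rewrite /dot mulmxDr mxE. Qed.

Lemma dotNr u v : dot u (- v) = - dot u v.
Proof. by rewrite /dot mulmxN mxE. Qed.

Lemma dotZr (k : R) u v : dot u (k *: v) = k * dot u v.
Proof. by rewrite /dot -scalemxAr mxE. Qed.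

Lemma dotBr u v x : dot u (v - x) = dot u v - dot u x.
Proof. by rewrite dotDr dotNr. Qed.

Lemma dotDl u v x : dot (v + x) u = dot v u + dot x u.
Proof. by rewrite dotC dotDr !(dotC u). Qed.

Lemma dotNl u v : dot (- v) u = - dot v u.
Proof. by rewrite dotC dotNr dotC. Qed.

Lemma dotZl (k : R) u v : dot (k *: v) u = k * dot v u.
Proof. by rewrite dotC dotZr dotC. Qed.

Lemma dotBl u v x : dot (v - x) u = dot v u - dot x u.
Proof. by rewrite dotDl dotNl. Qed.

Lemma dotvv_ge0 u : 0 <= dot u u.
Proof. by rewrite /dot mxE sumr_ge0 // => i _; rewrite mxE -expr2 sqr_ge0. Qed.

Lemma dotvv_eq0 u : dot u u = 0 -> u = 0.
Proof.
rewrite /dot mxE => u0; apply/matrixP => i j; rewrite (ord1 j) mxE.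
have sq_ge0 k : 0 <= (u^T) 0 k * u k 0 by rewrite mxE -expr2 sqr_ge0.
have /eqP := psumr_eq0P (fun k _ => sq_ge0 k) u0 (i := i) isT.
by rewrite mxE mulf_eq0 orbb => /eqP.
Qed.

Lemma mx11_dot u v : u^T *m v = (dot u v)%:M.
Proof. exact: mx11_scalar. Qed.

Lemma dot_orthogonal M u v : M^T *m M = 1%:M -> dot (M *m u) (M *m v) = dot u v.
Proof. by move=> MK; rewrite /dot trmx_mul -mulmxA (mulmxA M^T) MK mul1mx. Qed.

Lemma orthogonal_invmx M : M^T *m M = 1%:M -> invmx M = M^T.
Proof.
move=> MK; have [_ Mu] := mulmx1_unit MK.
by rewrite -[invmx M]mul1mx -MK -mulmxA mulmxV // mulmx1.
Qed.

Lemma refl_mxE a v : refl_mx a *m v = v - dot a v *: a.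
Proof. by rewrite /refl_mx mulmxBl mul1mx -mulmxA mx11_dot mul_mx_scalar. Qed.

Lemma tr_refl_mx a : (refl_mx a)^T = refl_mx a.
Proof. by rewrite /refl_mx linearB /= trmx1 trmx_mul trmxK. Qed.

Section UnitRoot.
Variable a : 'cV[R]_n.
Hypothesis a2 : dot a a = 2.

Lemma refl_mx_invol : refl_mx a *m refl_mx a = 1%:M.
Proof.
rewrite /refl_mx mulmxBl mul1mx mulmxBr mulmx1 -mulmxA (mulmxA a^T) mx11_dot.
by rewrite a2 mul_scalar_mx -scalemxAr scalemxAl scaler_nat mulr2n
  mulmxDl opprB addrK subrK.
Qed.

Lemma refl_mxK v : refl_mx a *m (refl_mx a *m v) = v.
Proof. by rewrite mulmxA refl_mx_invol mul1mx. Qed.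

Lemma refl_mx_self : refl_mx a *m a = - a.
Proof. by rewrite refl_mxE a2 scaler_nat mulr2n opprD addrA subrr sub0r. Qed.

Lemma refl_mx_conj b :
  refl_mx (refl_mx a *m b) = refl_mx a *m refl_mx b *m refl_mx a.
Proof.
have -> : refl_mx b = 1%:M - b *m b^T by [].
rewrite (mulmxBr (refl_mx a)) mulmx1 (mulmxBl (refl_mx a)) refl_mx_invol.
by rewrite /refl_mx trmx_mul tr_refl_mx !mulmxA.
Qed.

End UnitRoot.
End ScalarProduct.

Section RootSystem.
Variables (R : realFieldType) (n : nat) (Phi Pi : seq 'cV[R]_n).
Hypotheses (hPhi : simply_laced_root_system Phi) (hPi : simple_system Phi Pi).
Implicit Types (a b c p q x y : 'cV[R]_n) (s : seq 'cV[R]_n) (u : 'M[R]_n).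
Local Notation pos := (is_pos Phi Pi).
Local Notation neg := (is_neg Phi Pi).

Lemma root_refl a b : a \in Phi -> b \in Phi -> refl_mx a *m b \in Phi.
Proof. by case: hPhi => _ _ + _; apply. Qed.

Lemma root_norm a : a \in Phi -> dot a a = 2.
Proof. by case: hPhi => _ + _ _; apply. Qed.

Lemma root_neq0 a : a \in Phi -> a <> 0.
Proof. by case: hPhi => Phi0 _ _ _ aPhi a0; rewrite -a0 aPhi in Phi0. Qed.

Lemma rootN b : b \in Phi -> - b \in Phi.
Proof. by move=> bPhi; rewrite -(refl_mx_self (root_norm bPhi)) root_refl. Qed.

Lemma simple_root p : p \in Pi -> p \in Phi.
Proof. by case: hPi => + _ _; apply. Qed.

(* (a,c) is an integer, and (c -+ a, c -+ a) = 4 -+ 2 (a,c) is positive unless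
   c = +-a. *)
Lemma dot_root_cases a c : a \in Phi -> c \in Phi -> c <> a -> c <> - a ->
  [\/ dot a c = -1, dot a c = 0 | dot a c = 1].
Proof.
move=> aPhi cPhi ca cNa.
have [z acz] : exists z : int, dot a c = z%:~R by case: hPhi => _ _ _; apply.
rewrite acz; have a2 := root_norm aPhi; have c2 := root_norm cPhi.
have normB : dot (c - a) (c - a) = 4 - 2 * z%:~R.
  by rewrite !dotBl !dotBr a2 c2 (dotC c a) acz; lra.
have normD : dot (c + a) (c + a) = 4 + 2 * z%:~R.
  by rewrite !dotDl !dotDr a2 c2 (dotC c a) acz; lra.
have := dotvv_ge0 (c - a); have := dotvv_ge0 (c + a).
rewrite normB normD => gD gB.
have zle : (z <= 2)%R by rewrite -(ler_int R); lra.
have zge : (-2 <= z)%R by rewrite -(ler_int R); lra.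
have zn2 : z != 2.
  apply: contra_notN ca => /eqP z2; apply/eqP; rewrite -subr_eq0; apply/eqP.
  by apply: dotvv_eq0; rewrite normB z2; lra.
have zNn2 : z != -2.
  apply: contra_notN cNa => /eqP z2; apply/eqP; rewrite -subr_eq0 opprK.
  by apply/eqP/dotvv_eq0; rewrite normD z2; lra.
have : z = -1 \/ z = 0 \/ z = 1 by lia.
by case=> [|[|]] ->; [constructor 1 | constructor 2 | constructor 3].
Qed.

Lemma pos_combD x y : pos_comb Pi x -> pos_comb Pi y -> pos_comb Pi (x + y).
Proof.
move=> [c [c0 ->]] [d [d0 ->]]; exists (fun i => c i + d i); split.
  by move=> i; rewrite addr_ge0.
by rewrite -big_split; apply: eq_bigr => i _; rewrite scalerDl.
Qed.

Lemma pos_comb_anti x : pos_comb Pi x -> pos_comb Pi (- x) -> x = 0.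
Proof.
move=> [c [c0 ex]] [d [d0 eNx]].
have cd0 : \sum_(i < size Pi) (c i + d i) *: Pi`_i = 0.
  rewrite -[RHS](subrr x) {1}ex eNx -big_split.
  by apply: eq_bigr => i _; rewrite scalerDl.
have [_ indep _] := hPi; have cd := indep _ cd0.
rewrite ex big1 // => i _.
have ci0 : c i = 0 by have := cd i; have := c0 i; have := d0 i; lra.
by rewrite ci0 scale0r.
Qed.

Lemma pos_neg_false b : pos b -> neg b -> False.
Proof. by move=> [bPhi pb] [_ nb]; apply: (root_neq0 bPhi); apply: pos_comb_anti. Qed.

Lemma pos_or_neg b : b \in Phi -> pos b \/ neg b.
Proof.
move=> bPhi; have [_ _ /(_ b bPhi)[] pb] := hPi; [left | right]; split=> //.
exact: rootN.
Qed.

Lemma negN b : neg (- b) <-> pos b.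
Proof. by rewrite /is_neg opprK. Qed.

Lemma posD x y : pos x -> pos y -> x + y \in Phi -> pos (x + y).
Proof. by move=> [_ px] [_ py] xyPhi; split=> //; apply: pos_combD. Qed.

Lemma negD x y : neg x -> neg y -> x + y \in Phi -> neg (x + y).
Proof.
move=> nx ny /rootN xyPhi; rewrite /is_neg opprD.
by apply: posD; rewrite -?opprD.
Qed.

Lemma sum_delta j (x : R) :
  \sum_(i < size Pi) (if i == j then x else 0) *: Pi`_i = x *: Pi`_j.
Proof.
by rewrite (bigD1 j) //= eqxx big1 ?addr0 // => i /negbTE ->; rewrite scale0r.
Qed.

Lemma simple_index p : p \in Pi -> exists j : 'I_(size Pi), Pi`_j = p.
Proof.
move=> pPi; have jP : (index p Pi < size Pi)%N by rewrite index_mem.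
by exists (Ordinal jP); rewrite /= nth_index.
Qed.

Lemma simple_pos p : p \in Pi -> pos p.
Proof.
move=> pPi; split; first exact: simple_root.
have [j <-] := simple_index pPi.
exists (fun i => if i == j then 1 else 0); split; last by rewrite sum_delta scale1r.
by move=> i; case: (i == j).
Qed.

(* Writing b and sigma_q b = b - (q,b) q as nonnegative combinations, linear
   independence of Pi forces b to be a multiple of q. *)
Lemma refl_simple_pos q b : q \in Pi -> pos b -> b <> q -> pos (refl_mx q *m b).
Proof.
move=> qPi bpos bq; have qPhi := simple_root qPi; have [bPhi [c [c0 eb]]] := bpos.
case: (pos_or_neg (root_refl qPhi bPhi)) => // -[_ [d [d0 ed]]].
have [j qj] := simple_index qPi; have [_ indep _] := hPi.
pose e i := c i + d i - (if i == j then dot q b else 0).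
have e0 : \sum_(i < size Pi) e i *: Pi`_i = 0.
  under eq_bigr => i _ do rewrite /e scalerBl scalerDl.
  rewrite sumrB big_split /= sum_delta -eb -ed qj refl_mxE.
  by rewrite opprB addrA addrC !addrA addNr add0r subrr.
have ci0 i : i != j -> c i = 0.
  move=> ij; have := indep _ e0 i; rewrite /e (negbTE ij) subr0.
  by have := c0 i; have := d0 i; lra.
have ebq : b = c j *: q.
  rewrite eb (bigD1 j) //= big1 ?addr0 ?qj // => i ij.
  by rewrite ci0 // scale0r.
have := root_norm bPhi; rewrite {1}ebq dotZl {1}ebq dotZr (root_norm qPhi) => cj2.
have cj1 : c j = 1 by have := c0 j; move: cj2; nra.
by case: bq; rewrite ebq cj1 scale1r.
Qed.

Lemma trmx_wprodK s : {subset s <= Phi} -> (wprod s)^T *m wprod s = 1%:M.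
Proof.
elim: s => [|q s IH] sPhi /=; first by rewrite trmx1 mul1mx.
have [/root_norm q2 /IH sK] := subset_consP sPhi.
by rewrite trmx_mul tr_refl_mx -mulmxA (mulmxA (refl_mx q)) refl_mx_invol // mul1mx.
Qed.

Lemma wprod_root s c : {subset s <= Phi} -> c \in Phi -> (wprod s)^T *m c \in Phi.
Proof.
elim: s c => [|q s IH] c qsPhi cPhi /=; first by rewrite trmx1 mul1mx.
have [qPhi sPhi] := subset_consP qsPhi.
by rewrite trmx_mul tr_refl_mx -mulmxA IH ?root_refl.
Qed.

Lemma in_weyl_trmxK u : in_weyl Phi u -> u^T *m u = 1%:M.
Proof. by case=> s [sPhi ->]; apply: trmx_wprodK. Qed.

Lemma in_weyl_root u c : in_weyl Phi u -> c \in Phi -> u^T *m c \in Phi.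
Proof. by case=> s [sPhi ->]; apply: wprod_root. Qed.

Lemma in_weyl_refl a u : a \in Phi -> in_weyl Phi u -> in_weyl Phi (refl_mx a *m u).
Proof.
move=> aPhi [s [sPhi ->]]; exists (a :: s); split=> // x.
by rewrite inE => /orP[/eqP ->|/sPhi].
Qed.

(* N(u), with u^T in place of u^-1 (elements of W are orthogonal). *)
Definition inverted u c := pos c /\ neg (u^T *m c).

Definition inv_count u := count (fun c => asbool (inverted u c)) (undup Phi).

Lemma inv_setE u b : u^T *m u = 1%:M -> inv_set Phi Pi u b <-> inverted u b.
Proof.
move=> uK; split=> -[bpos bneg]; split=> //.
  by case: bneg => g [gneg ->]; rewrite mulmxA uK mul1mx.
by exists (u^T *m b); rewrite mulmxA mulmx1C // mul1mx.
Qed.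

Lemma inverted_refl u a c :
  inverted (refl_mx a *m u) c <-> pos c /\ neg (u^T *m (refl_mx a *m c)).
Proof. by rewrite /inverted trmx_mul tr_refl_mx mulmxA. Qed.

(* N(sigma_p u) is p together with sigma_p N(u), because sigma_p permutes the
   positive roots other than p. *)
Lemma inv_count_step u p : p \in Pi -> pos (u^T *m p) ->
  inv_count (refl_mx p *m u) = (inv_count u).+1.
Proof.
move=> pPi upos; have pPhi := simple_root pPi; have p2 := root_norm pPhi.
pose Q c := asbool (inverted u (refl_mx p *m c)).
have split_p :
    (fun c => asbool (inverted (refl_mx p *m u) c)) =1 predU (pred1 p) Q.
  move=> c /=; rewrite /Q; have [->|cp] := eqVneq c p.
    apply/asboolP/inverted_refl; split; first exact: simple_pos.
    by rewrite refl_mx_self // mulmxN negN.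
  apply/asboolP/asboolP.
    move/inverted_refl=> [cpos cneg]; split=> //.
    by apply: refl_simple_pos => //; apply/eqP.
  move=> [rpos rneg]; apply/(inverted_refl u p c); split=> //.
  rewrite -(refl_mxK p2 c); apply: refl_simple_pos => // rp.
  by move: rneg; rewrite rp => /(pos_neg_false upos).
rewrite /inv_count (eq_count split_p).
have := count_predUI (pred1 p) Q (undup Phi).
have -> : count (predI (pred1 p) Q) (undup Phi) = 0%N.
  rewrite (eq_count (a2 := pred0)) ?count_pred0 // => c /=.
  apply/negbTE/andP => -[/eqP -> /asboolP[]].
  by rewrite refl_mx_self // => pN _; apply: pos_neg_false (simple_pos pPi) pN.
rewrite addn0 => ->; rewrite count_uniq_mem ?undup_uniq // mem_undup pPhi.
rewrite add1n /Q (count_involution (fun c => asbool (inverted u c))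
  (f := mulmx (refl_mx p))) ?undup_uniq //.
- by move=> c; rewrite refl_mxK.
- by move=> c; rewrite !mem_undup; apply: root_refl.
Qed.

Lemma exchange s b : {subset s <= Pi} -> pos b -> neg ((wprod s)^T *m b) ->
  exists2 s', (size s').+1 = size s /\ {subset s' <= s}
            & refl_mx b *m wprod s = wprod s'.
Proof.
elim: s b => [|q s IH] b qsPi bpos /=.
  by rewrite trmx1 mul1mx => /(pos_neg_false bpos).
have [qPi sPi] := subset_consP qsPi; have q2 := root_norm (simple_root qPi).
rewrite trmx_mul tr_refl_mx -mulmxA => bneg.
have [->|bq] := eqVneq b q.
  exists s; last by rewrite mulmxA refl_mx_invol // mul1mx.
  by split=> // x xs; rewrite inE xs orbT.
have [|s' [ss' s's] es'] := IH _ sPi (refl_simple_pos qPi bpos _) bneg.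
  exact/eqP.
exists (q :: s').
  split=> [|x]; first by rewrite /= ss'.
  by rewrite !inE => /orP[->|/s's ->]; rewrite ?orbT.
by rewrite /= -es' refl_mx_conj // !mulmxA refl_mx_invol // mul1mx.
Qed.

Lemma inv_count_reduced s : {subset s <= Pi} ->
  (forall j, (j < size s)%N -> ~ has_word Pi (wprod s) j) ->
  inv_count (wprod s) = size s.
Proof.
elim: s => [|p s IH] psPi pmin /=.
  rewrite /inv_count (eq_count (a2 := pred0)) ?count_pred0 // => c /=.
  by apply/negbTE/asboolP => -[cpos]; rewrite trmx1 mul1mx; apply: pos_neg_false.
have [pPi sPi] := subset_consP psPi.
have smin j : (j < size s)%N -> ~ has_word Pi (wprod s) j.
  move=> js [t [tj tPi ews]]; apply: (pmin j.+1); first by rewrite /= ltnS.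
  exists (p :: t); split; rewrite /= ?tj ?ews // => x.
  by rewrite inE => /orP[/eqP ->|/tPi].
have sPhi : {subset s <= Phi} by move=> x /sPi /simple_root.
case: (pos_or_neg (wprod_root sPhi (simple_root pPi))) => ws_p.
  by rewrite inv_count_step // IH.
have [s' [ss' s's] es'] := exchange sPi (simple_pos pPi) ws_p.
case: (pmin (size s')); first by rewrite /= -ss' ltnS leqnSn.
by exists s'; split=> // x /s's /sPi.
Qed.

Lemma inv_count_ell u k : ell_is Pi u k -> inv_count u = k.
Proof.
move=> [[s [sk sPi ->]] umin]; rewrite -sk inv_count_reduced // => j.
by rewrite sk => /umin.
Qed.

Lemma inv_count_deleted u a : inverted u a ->
  count (fun b => asbool (inverted u b /\ b <> a)) (undup Phi) = (inv_count u).-1.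
Proof.
move=> ua; have aPhi : a \in Phi by case: ua => -[].
set A := fun b => _.
have -> : inv_count u = count (predU A (pred1 a)) (undup Phi).
  apply: eq_count => b /=; have [->|ba] := eqVneq b a.
    by rewrite orbT; apply/asboolP.
  by rewrite orbF; apply/asboolP/asboolP => [|[]] //; split=> //; apply/eqP.
have := count_predUI A (pred1 a) (undup Phi).
rewrite (eq_count (a1 := predI A _) (a2 := pred0)) ?count_pred0 => [|b /=].
  by rewrite count_uniq_mem ?undup_uniq // mem_undup aPhi addn0 addn1 => ->.
by apply/negbTE/andP => -[/asboolP[_ ba] /eqP].
Qed.

Lemma psi_shift w a b :
  [/\ dot a b = 1, pos (b - a) & ~ inv_set Phi Pi w (b - a)] ->
  psi Phi Pi w a b = b - a.
Proof. by rewrite /psi; case: excluded_middle_informative. Qed.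

Lemma psi_fix w a b :
  ~ [/\ dot a b = 1, pos (b - a) & ~ inv_set Phi Pi w (b - a)] -> psi Phi Pi w a b = b.
Proof. by rewrite /psi; case: excluded_middle_informative. Qed.

Section Deletion.
Variables (w : 'M[R]_n) (a : 'cV[R]_n).
Hypotheses (hw : in_weyl Phi w) (ha : inv_set Phi Pi w a).

Let wK : w^T *m w = 1%:M := in_weyl_trmxK hw.
Let aPhi : a \in Phi := ha.1.1.
Let awK : (refl_mx a *m w)^T *m (refl_mx a *m w) = 1%:M :=
  in_weyl_trmxK (in_weyl_refl aPhi hw).
Let wa : inverted w a := proj1 (inv_setE a wK) ha.

(* A right inverse of psi, from N(sigma_a w) to N(w) minus a. *)
Definition lift c := if asbool (dot a c = -1 /\ ~ inverted w c) then c + a else c.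

Lemma lift_spec c : inverted (refl_mx a *m w) c ->
  (inverted w (lift c) /\ lift c <> a) /\ psi Phi Pi w a (lift c) = c.
Proof.
move=> /inverted_refl[cpos cneg]; have [cPhi _] := cpos; have [apos aneg] := wa.
have a2 := root_norm aPhi.
have ca : c <> a.
  move=> eca; move: cneg; rewrite eca refl_mx_self // mulmxN.
  exact: pos_neg_false aneg.
have cNa : c <> - a by move=> ecNa; move: cpos; rewrite ecNa => /(pos_neg_false apos).
move: cneg; rewrite refl_mxE /lift.
case: (dot_root_cases aPhi cPhi ca cNa) => ac; rewrite ac; first last.
- rewrite scale1r => cneg; have cw : inverted w c.
    split=> //; rewrite -(subrK a c) mulmxDr; apply: negD => //.
    by rewrite -mulmxDr subrK (in_weyl_root hw).
  case: asboolP => [[] /= ?|_]; first by exfalso; lra.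
  split=> //; apply: psi_fix => -[_ capos []]; apply/inv_setE => //; split=> //.
- rewrite scale0r subr0 => cneg; case: asboolP => [[] ?|_]; first by exfalso; lra.
  by split=> //; apply: psi_fix; rewrite ac => -[] ?; lra.
rewrite scaleN1r opprK => caneg; case: (asboolP (inverted w c)) => cw.
  case: asboolP => [[_ []] //|_]; split=> //.
  by apply: psi_fix; rewrite ac => -[] ?; lra.
case: asboolP => [_|[]//]; have caPhi : c + a \in Phi.
  by have := root_refl aPhi cPhi; rewrite refl_mxE ac scaleN1r opprK.
split; first split; first by split=> //; apply: posD.
  by move/(canRL (addrK a)); rewrite subrr; apply: root_neq0.
rewrite psi_shift ?addrK // dotDr ac a2; split=> //; first lra.
by move/(inv_setE _ wK).
Qed.

Lemma lift_inv_set c : inv_set Phi Pi (refl_mx a *m w) c ->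
  (inv_set Phi Pi w (lift c) /\ lift c <> a) /\ psi Phi Pi w a (lift c) = c.
Proof. by move/(inv_setE _ awK)/lift_spec => [[/(inv_setE _ wK)]]. Qed.

Lemma lift_onto b : inv_count (refl_mx a *m w) = (inv_count w).-1 ->
  inv_set Phi Pi w b -> b <> a ->
  exists2 c, inv_set Phi Pi (refl_mx a *m w) c & lift c = b.
Proof.
move=> hcount /(inv_setE _ wK) wb ba.
have onto : {in fun x => asbool (inverted w x /\ x <> a), forall x,
    exists2 c, asbool (inverted (refl_mx a *m w) c) & lift c = x}.
  apply: (count_surj (g := psi Phi Pi w a)) (undup_uniq Phi) _ _ _ _.
  - by move=> x /asboolP[[[xPhi _] _] _]; rewrite mem_undup.
  - by move=> c /asboolP/lift_spec[? _]; apply/asboolP.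
  - by move=> c /asboolP/lift_spec[_].
  - by rewrite inv_count_deleted.
have [|c /asboolP/(inv_setE _ awK)] := onto b; first exact/asboolP.
by exists c.
Qed.

(* If b - a is positive with (a,b) = 1 then sigma_p maps -w^-1 b, a positive
   root other than p, to -w^-1 (b - a); so b - a is in N(w) as well. *)
Lemma psi_simple_fix p b : p \in Pi -> invmx w *m a = - p ->
  inv_set Phi Pi w b -> b <> a -> psi Phi Pi w a b = b.
Proof.
rewrite orthogonal_invmx // => pPi wap /(inv_setE _ wK)[bpos bneg] ba.
apply: psi_fix => -[ab1 bapos []]; apply/(inv_setE _ wK); split=> //.
set g := w^T *m b; have gp : - g <> p.
  move=> egp; apply: ba; rewrite -[b]mul1mx -[a]mul1mx -(mulmx1C wK) -!mulmxA.
  by rewrite wap -egp opprK.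
have pg : dot p g = -1.
  by rewrite -[p]opprK -wap dotNl dot_orthogonal ?trmxK ?(mulmx1C wK) ?ab1.
have := refl_simple_pos pPi bneg gp.
by rewrite refl_mxE dotNr pg opprK scale1r /is_neg mulmxBr wap -/g opprB addrC.
Qed.

End Deletion.

End RootSystem.

Theorem mainTheorem15 (R : realFieldType) (n : nat)
    (Phi Pi : seq 'cV[R]_n)
    (hPhi : simply_laced_root_system Phi) (hPi : simple_system Phi Pi)
    (w : 'M[R]_n) (hw : in_weyl Phi w)
    (a : 'cV[R]_n) (ha : inv_set Phi Pi w a)
    (hl : exists k : nat, ell_is Pi w k /\ ell_is Pi (refl_mx a *m w) k.-1) :
  let A := fun b => inv_set Phi Pi w b /\ b <> a in
  let B := inv_set Phi Pi (refl_mx a *m w) in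
  [/\ (forall b, A b -> B (psi Phi Pi w a b)),
      (forall b1 b2, A b1 -> A b2 ->
          psi Phi Pi w a b1 = psi Phi Pi w a b2 -> b1 = b2),
      (forall c, B c -> exists b, A b /\ psi Phi Pi w a b = c) &
      ((exists p, p \in Pi /\ invmx w *m a = - p) -> forall b, B b <-> A b)].
Proof.
move=> A B; have [k [lw law]] := hl.
have hcount : inv_count Phi Pi (refl_mx a *m w) = (inv_count Phi Pi w).-1.
  by rewrite (inv_count_ell hPhi hPi lw) (inv_count_ell hPhi hPi law).
set lift_a := lift Phi Pi w a.
have psi_lift c : B c -> A (lift_a c) /\ psi Phi Pi w a (lift_a c) = c.
  exact: lift_inv_set.
have onto b : A b -> exists2 c, B c & lift_a c = b.
  by move=> [wb ba]; apply: lift_onto.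
have psi_A b : A b -> B (psi Phi Pi w a b).
  by move=> /onto[c Bc <-]; rewrite (psi_lift c Bc).2.
have psi_onto c : B c -> exists b, A b /\ psi Phi Pi w a b = c.
  by move=> /psi_lift; exists (lift_a c).
split=> // [b1 b2 | [p [pPi wap]] b].
  move=> /onto[c1 Bc1 <-] /onto[c2 Bc2 <-].
  by rewrite (psi_lift _ Bc1).2 (psi_lift _ Bc2).2 => ->.
have fixA b' : A b' -> psi Phi Pi w a b' = b'.
  by move=> [wb ba]; apply: (psi_simple_fix hPhi hPi hw pPi).
split=> [/psi_onto[b' [Ab' <-]] | Ab]; first by rewrite fixA.
by rewrite -(fixA b Ab); apply: psi_A.
Qed.
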